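(* Let $P\subseteq\mathbb{R}^2$ be a nonempty closed convex set such that $\tau P=P^{\circ}$. Then either $P$ is a line through the origin, or $P$ is bounded and full-dimensional.
   Context: $\tau:\mathbb{R}^2\to\mathbb{R}^2$ denotes the $90^\circ$ counterclockwise rotation. The polar of $P$ is $P^{\circ}=\{x\in\mathbb{R}^2: y^\top x\le 1\text{ for all }y\in P\}$. *)

From HB Require Import structures.
From mathcomp Require Import all_boot all_order all_algebra.
From mathcomp Require Import all_classical all_reals all_analysis.
Set Implicit Arguments. Unset Strict Implicit. Unset Printing Implicit Defensive.
Import Order.TTheory GRing.Theory Num.Theory.
Import numFieldNormedType.Exports.
Local Open Scope classical_set_scope.
Local Open Scope ring_scope.

Definition dot2 {R : realType} (x y : 'rV[R]_2) : R := \sum_(i < 2) x 0 i * y 0 i.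

(* 90 degree counterclockwise rotation: (a, b) |-> (-b, a) *)
Definition tau {R : realType} (v : 'rV[R]_2) : 'rV[R]_2 :=
  \row_(j < 2) (if j == 0 then - v 0 1 else v 0 0).

Definition polar {R : realType} (P : set 'rV[R]_2) : set 'rV[R]_2 :=
  [set x | forall y, P y -> dot2 y x <= 1].

Definition convex_set2 {R : realType} (P : set 'rV[R]_2) : Prop :=
  forall x y (t : R), P x -> P y -> 0 <= t -> t <= 1 -> P (t *: x + (1 - t) *: y).

Definition line_through_origin {R : realType} (P : set 'rV[R]_2) : Prop :=
  exists v : 'rV[R]_2, v != 0 /\ P = [set t *: v | t in [set: R]].

Definition full_dimensional {R : realType} (P : set 'rV[R]_2) : Prop :=
  interior P !=set0.

From HB Require Import structures.
From mathcomp Require Import all_boot all_order all_algebra.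
From mathcomp Require Import all_classical all_reals all_analysis.
From mathcomp Require Import ring.
Import Order.TTheory GRing.Theory Num.Theory.
Import numFieldNormedType.Exports.
Local Open Scope classical_set_scope.
Local Open Scope ring_scope.

Lemma ord2P (i : 'I_2) : i = 0 \/ i = 1.
Proof. by case: i => [[|[|//]]] Hi; [left|right]; apply: val_inj. Qed.

Lemma normr_coord_le (K : realDomainType) m n (x : 'M[K]_(m, n)) i j :
  `|x i j| <= `|x|.
Proof.
have -> : `|x| = mx_norm x by [].
by rewrite mx_normrE (le_bigmax _ (fun ij => `|x ij.1 ij.2|) (i, j)).
Qed.

Section det2.
Context {R : comPzRingType}.

Definition det2 (x y : 'rV[R]_2) : R := x 0 0 * y 0 1 - x 0 1 * y 0 0.

Lemma det2C x y : det2 y x = - det2 x y.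
Proof. by rewrite /det2; ring. Qed.

Lemma det2Zl t x y : det2 (t *: x) y = t * det2 x y.
Proof. by rewrite /det2 !mxE; ring. Qed.

Lemma det2_cramer a b w : det2 a b *: w = det2 w b *: a - det2 w a *: b.
Proof. by apply/rowP => i; rewrite !mxE /det2; case: (ord2P i) => ->; ring. Qed.

End det2.

Section plane.
Context {R : realType}.
Implicit Types x y v w : 'rV[R]_2.

Lemma dot2E x y : dot2 x y = x 0 0 * y 0 0 + x 0 1 * y 0 1.
Proof.
rewrite /dot2 big_ord_recl big_ord1.
have -> : lift ord0 ord0 = 1 :> 'I_2 by apply: val_inj.
by have -> : ord0 = 0 :> 'I_2 by apply: val_inj.
Qed.

Lemma dot2_tau x y : dot2 y (tau x) = det2 x y.
Proof. by rewrite dot2E /tau /det2 !mxE /=; ring. Qed.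

Lemma tau_inj : injective (@tau R).
Proof.
move=> x y /rowP txy; apply/rowP => i.
move: (txy 0) (txy 1); rewrite !mxE /=.
by case: (ord2P i) => -> // /oppr_inj.
Qed.

Lemma dot2_gt0 v : v != 0 -> 0 < dot2 v v.
Proof.
move=> v0; rewrite dot2E -!expr2.
rewrite lt_def addr_ge0 ?sqr_ge0 // andbT paddr_eq0 ?sqr_ge0 // !sqrf_eq0.
apply: contra v0 => /andP[/eqP v00 /eqP v01]; apply/eqP/rowP => i.
by rewrite mxE; case: (ord2P i) => ->.
Qed.

Lemma dot2_decomp v y : dot2 v v *: y = dot2 y v *: v + det2 v y *: tau v.
Proof.
apply/rowP => i; rewrite !dot2E /tau /det2 !mxE.
by case: (ord2P i) => -> /=; ring.
Qed.

Lemma det2_eq0_collinear v y :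
  v != 0 -> det2 v y = 0 -> y = (dot2 y v / dot2 v v) *: v.
Proof.
move=> v0 vy0; have vv0 : dot2 v v != 0 by rewrite gt_eqF ?dot2_gt0.
apply: (scalerI vv0); rewrite dot2_decomp vy0 scale0r addr0 scalerA.
by rewrite mulrC divfK.
Qed.

Lemma normr_det2_le x y : `|det2 x y| <= 2 * (`|x| * `|y|).
Proof.
rewrite /det2 mulr2n mulrDl mul1r.
apply: (le_trans (ler_normB _ _)); rewrite !normrM.
by apply: lerD; apply: ler_pM; rewrite ?normr_coord_le.
Qed.

End plane.

Section rotated_self_polar.
Context {R : realType} {P : set 'rV[R]_2}.
Hypothesis tauP : tau @` P = polar P.

Lemma rot_polarP w : P w <-> (forall y, P y -> det2 w y <= 1).
Proof.
split=> [Pw y Py | det_le1].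
  have : polar P (tau w) by rewrite -tauP; exists w.
  by move=> /(_ y Py); rewrite dot2_tau.
have : polar P (tau w) by move=> y Py; rewrite dot2_tau; apply: det_le1.
by rewrite -tauP => -[x Px /tau_inj <-].
Qed.

Lemma normr_det2_le1 x y : P x -> P y -> `|det2 x y| <= 1.
Proof.
move=> Px Py; have /rot_polarP xP := Px; have /rot_polarP yP := Py.
by rewrite ler_norml xP // andbT lerNl -det2C yP.
Qed.

Lemma rot_polar_bounded a b w : P a -> P b -> det2 a b != 0 -> P w ->
  `|w| <= (`|a| + `|b|) / `|det2 a b|.
Proof.
move=> Pa Pb ab0 Pw; rewrite ler_pdivlMr ?normr_gt0 // mulrC -normrZ.
rewrite det2_cramer; apply: (le_trans (ler_normB _ _)); rewrite !normrZ.
by apply: lerD; rewrite ler_piMl ?normr_det2_le1.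
Qed.

Lemma rot_polar_ball0 M : 0 < M -> (forall y, P y -> `|y| <= M) ->
  ball 0 (2 * M)^-1 `<=` P.
Proof.
move=> M0 leM w; rewrite -ball_normE /= sub0r normrN => wM.
apply/rot_polarP => y Py; apply: (le_trans (ler_norm _)).
apply: (le_trans (normr_det2_le _ _)).
have half : 2 * ((2 * M)^-1 * M) = 1 :> R by field; rewrite gt_eqF.
rewrite -[leRHS]half ler_pM2l //.
by apply: ler_pM; rewrite ?normr_ge0 ?leM ?ltW.
Qed.

Lemma rot_polar_neq0 : exists2 v, P v & v != 0.
Proof.
apply: contrapT => noP; pose v : 'rV[R]_2 := const_mx 1.
have v0 : v != 0 by apply/eqP => /rowP /(_ 0); rewrite !mxE; apply/eqP/oner_neq0.
have : P v.
  apply/rot_polarP => y Py; have -> : y = 0.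
    by apply: contrapT => /eqP y0; apply: noP; exists y.
  by rewrite /det2 !mxE !mulr0 subrr ler01.
by move=> Pv; apply: noP; exists v.
Qed.

Lemma rot_polar_line v : P v -> v != 0 ->
  (forall x y, P x -> P y -> det2 x y = 0) -> P = [set t *: v | t in [set: R]].
Proof.
move=> Pv v0 det0; apply/seteqP; split=> [y Py | _ [t _ <-]].
  by exists (dot2 y v / dot2 v v) => //; rewrite -det2_eq0_collinear ?det0.
by apply/rot_polarP => y Py; rewrite det2Zl det0 // mulr0 ler01.
Qed.

End rotated_self_polar.

Theorem proposition2 (R : realType) (P : set 'rV[R]_2) :
  P !=set0 -> closed P -> convex_set2 P -> tau @` P = polar P ->
  line_through_origin P \/ (bounded_set P /\ full_dimensional P).
Proof.
move=> _ _ _ tauP; have [v Pv v0] := rot_polar_neq0 tauP.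
have [[a [b [Pa Pb ab0]]] | dependent] :=
  pselect (exists a b, [/\ P a, P b & det2 a b != 0]); last first.
  left; exists v; split=> //; apply: rot_polar_line => // x y Px Py.
  by apply: contra_notP dependent => /eqP xy0; exists x, y.
right; set M := (`|a| + `|b|) / `|det2 a b|.
have leM : forall w, P w -> `|w| <= M by move=> w; apply: rot_polar_bounded.
have M0 : 0 < M by apply: lt_le_trans (leM _ Pv); rewrite normr_gt0.
split; first by apply/(@ex_bound _ _ _ id _ (globally_properfilter Pv)); exists M.
exists 0; apply/nbhs_ballP; exists (2 * M)^-1; last exact: rot_polar_ball0.
by rewrite /= invr_gt0 mulr_gt0.
Qed.
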